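(* Let $\mu_0,\mu_1,\mu_2>0$, $k\ge4$ and $\boldsymbol{s}\in\mathbb{R}^n$. The canonical spline EMD cost function $\boldsymbol{c}_1[\boldsymbol{s}](\boldsymbol{a},\boldsymbol{\phi})=\big\|\mathbb{B}_k(\boldsymbol{s})-\mathbb{B}_k(\boldsymbol{a})\cdot\cos(\mathbb{B}_k(\boldsymbol{\phi}))\big\|_2^2$, defined on $\boldsymbol{\mathcal{S}}_{\mu_0,\mu_1,\mu_2}$, is not a convex function of $(\boldsymbol{a},\boldsymbol{\phi})$.
   Context: Spline setting: $k,\ell\in\mathbb{N}$, $k\le\ell-1$, knots $\tau_0<\dots<\tau_{\ell-1}$, $n=k+\ell-2$, extended knot vector $\delta_i=\tau_0$ ($0\le i\le k-1$), $\delta_i=\tau_{i-k+1}$ ($k\le i\le n-1$), $\delta_i=\tau_{\ell-1}$ ($n\le i\le n+k-1$); $B_{i,k}$ ($0\le i\le n-1$) are the B-splines of order $k$ on this extended knot vector (de Boor–Cox recursion, vanishing-denominator terms set to $0$), and $\mathbb{B}_k(\boldsymbol{x})=\sum_{i=0}^{n-1}x_iB_{i,k}$ for $\boldsymbol{x}\in\mathbb{R}^n$. $\|f\|_2^2=\int_{\tau_0}^{\tau_{\ell-1}}f(t)^2\,dt$. For $f,g$ on $[\tau_0,\tau_{\ell-1}]$, $f\preceq g$ means pointwise $\le$; $|f|$ is the pointwise absolute value. For $\mu_0,\mu_1,\mu_2>0$ and $k\ge4$, $\boldsymbol{\mathcal{S}}_{\mu_0,\mu_1,\mu_2}$ (intrinsic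 mode spline function souls) is the set of $(\boldsymbol{a},\boldsymbol{\phi})\in\mathbb{R}^n\times\mathbb{R}^n$ with $0\preceq\mathbb{B}_k(\boldsymbol{a})$, $\mu_0\preceq\mathbb{B}_k(\boldsymbol{\phi})'$, $|\mathbb{B}_k(\boldsymbol{a})'|\preceq\mu_1|\mathbb{B}_k(\boldsymbol{\phi})'|$, $|\mathbb{B}_k(\boldsymbol{\phi})''|\preceq\mu_2|\mathbb{B}_k(\boldsymbol{\phi})'|$. A function $F$ on a convex set $C\subseteq\mathbb{R}^m$ is convex iff $F(\lambda x+(1-\lambda)y)\le\lambda F(x)+(1-\lambda)F(y)$ for all $x,y\in C$, $\lambda\in[0,1]$. *)

From Stdlib Require Import Reals Lra.
From Coquelicot Require Import Coquelicot.
Open Scope R_scope.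

(* Vectors of R^n are represented as functions nat -> R; only the entries
   with index < n are ever used. *)

(* Extended knot vector delta_i built from tau_0 < ... < tau_{l-1}. *)
Definition delta (k l : nat) (tau : nat -> R) (i : nat) : R :=
  let n := (k + l - 2)%nat in
  if Nat.ltb i k then tau 0%nat
  else if Nat.ltb i n then tau (i - k + 1)%nat
  else tau (l - 1)%nat.

Definition sdiv (num den : R) : R :=
  if Req_EM_T den 0 then 0 else num / den.

(* bsp d m i t = B_{i,m+1}(t) on the knot vector d (de Boor--Cox). *)
Fixpoint bsp (d : nat -> R) (m : nat) (i : nat) (t : R) : R :=
  match m with
  | O => if Rle_dec (d i) t then (if Rlt_dec t (d (S i)) then 1 else 0) else 0
  | S m' =>
      sdiv (t - d i) (d (i + S m')%nat - d i) * bsp d m' i t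
      + sdiv (d (i + S (S m'))%nat - t) (d (i + S (S m'))%nat - d (S i))
          * bsp d m' (S i) t
  end.

Definition Bspl (k l : nat) (tau : nat -> R) (i : nat) (t : R) : R :=
  bsp (delta k l tau) (k - 1) i t.

Definition BBk (k l : nat) (tau : nat -> R) (x : nat -> R) (t : R) : R :=
  sum_n (fun i => x i * Bspl k l tau i t) (k + l - 2 - 1)%nat.

(* The set S_{mu0,mu1,mu2} of intrinsic mode spline function souls.
   Pointwise conditions are imposed on the open interval (tau_0, tau_{l-1}),
   where the derivatives are ordinary two-sided ones. *)
Definition IMSS (k l : nat) (tau : nat -> R) (mu0 mu1 mu2 : R)
    (a phi : nat -> R) : Prop :=
  forall t, tau 0%nat < t < tau (l - 1)%nat ->
    0 <= BBk k l tau a t /\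
    mu0 <= Derive (BBk k l tau phi) t /\
    Rabs (Derive (BBk k l tau a) t) <= mu1 * Rabs (Derive (BBk k l tau phi) t) /\
    Rabs (Derive (Derive (BBk k l tau phi)) t)
      <= mu2 * Rabs (Derive (BBk k l tau phi) t).

Definition cost1 (k l : nat) (tau : nat -> R) (s a phi : nat -> R) : R :=
  RInt (fun t => (BBk k l tau s t - BBk k l tau a t * cos (BBk k l tau phi t)) ^ 2)
       (tau 0%nat) (tau (l - 1)%nat).

Definition vcomb (lam : R) (x y : nat -> R) : nat -> R :=
  fun i => lam * x i + (1 - lam) * y i.

Definition convex_on (C : (nat -> R) -> (nat -> R) -> Prop)
    (F : (nat -> R) -> (nat -> R) -> R) : Prop :=
  forall a1 p1 a2 p2 lam,
    C a1 p1 -> C a2 p2 -> 0 <= lam <= 1 ->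
    F (vcomb lam a1 a2) (vcomb lam p1 p2)
      <= lam * F a1 p1 + (1 - lam) * F a2 p2.

(* B-splines of order k form a partition of unity and reproduce affine
   functions on [tau_0, tau_{l-1}].  Hence the coefficient vector a = 1 and
   the vectors phi_th whose spline is the line t |-> om t + th ("pure tones")
   give souls (a, phi_th) for every frequency om >= mu0, and on them the cost
   is G(th) = int (BB(s) - cos(om t + th))^2 dt, a 2pi-periodic function of th.
   Since phi is affine in th, the convex combination with weights 3/4, 1/4 of
   the souls with phases th and th + 2pi is the soul with phase th + pi/2, so
   convexity would give G(th + pi/2) <= G(th) for all th, which together with
   periodicity forces G to be pi/2-periodic.  But, independently of s,
     G(th) + G(th + pi) - G(th + pi/2) - G(th + 3pi/2)
       = int 2 cos(2(om t + th)) dt,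
   and for a suitable frequency and phase this integral equals 2/om <> 0. *)

From Stdlib Require Import Reals Lra Lia ZArith.
From Coquelicot Require Import Coquelicot.
Open Scope R_scope.

(* rsum f a n = f a + ... + f (a + n - 1): sums with a movable lower bound,
   needed for the index shifts in the de Boor--Cox recursion. *)
Fixpoint rsum (f : nat -> R) (a n : nat) : R :=
  match n with O => 0 | S n' => rsum f a n' + f (a + n')%nat end.

Lemma rsum_ext f g a n :
  (forall i, (a <= i < a + n)%nat -> f i = g i) -> rsum f a n = rsum g a n.
Proof.
  induction n as [|n IH]; simpl; intros H; auto.
  rewrite IH, H by (intros; try apply H; lia). reflexivity.
Qed.

Lemma rsum_zero f a n : (forall i, (a <= i < a + n)%nat -> f i = 0) -> rsum f a n = 0.
Proof.
  induction n as [|n IH]; simpl; intros H; [lra|].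
  rewrite IH, H by (intros; try apply H; lia). ring.
Qed.

Lemma rsum_plus f g a n : rsum (fun i => f i + g i) a n = rsum f a n + rsum g a n.
Proof. induction n as [|n IH]; simpl; [lra|]. rewrite IH; ring. Qed.

Lemma rsum_scal r f a n : rsum (fun i => r * f i) a n = r * rsum f a n.
Proof. induction n as [|n IH]; simpl; [ring|]. rewrite IH; ring. Qed.

Lemma sum_n_rsum (f : nat -> R) N : sum_n f N = rsum f 0 (S N).
Proof.
  induction N as [|N IH].
  - rewrite sum_O. simpl. ring.
  - rewrite sum_Sn, IH. simpl. unfold plus; simpl. ring.
Qed.

Section BSplineIdentities.

Variable d : nat -> R.
Hypothesis d_mono : forall i j, (i <= j)%nat -> d i <= d j.

Definition wup (m j : nat) (t : R) : R := sdiv (t - d j) (d (j + S m)%nat - d j).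
Definition wdown (m j : nat) (t : R) : R :=
  sdiv (d (j + S m)%nat - t) (d (j + S m)%nat - d j).

Lemma bsp_succ m i t :
  bsp d (S m) i t = wup m i t * bsp d m i t + wdown m (S i) t * bsp d m (S i) t.
Proof.
  simpl. unfold wup, wdown.
  replace (S i + S m)%nat with (i + S (S m))%nat by lia. reflexivity.
Qed.

Lemma bsp_support m : forall i t, bsp d m i t <> 0 -> d i <= t < d (i + S m)%nat.
Proof.
  induction m as [|m IH]; intros i t H.
  - simpl in H. replace (i + 1)%nat with (S i) by lia.
    destruct (Rle_dec (d i) t); destruct (Rlt_dec t (d (S i))); lra.
  - rewrite bsp_succ in H. destruct (Req_dec (bsp d m i t) 0) as [H0|H0].
    + assert (H1 : bsp d m (S i) t <> 0) by (intro E; rewrite H0, E in H; lra).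
      apply IH in H1. assert (d i <= d (S i)) by (apply d_mono; lia).
      replace (S i + S m)%nat with (i + S (S m))%nat in H1 by lia. lra.
    + apply IH in H0.
      assert (d (i + S m)%nat <= d (i + S (S m))%nat) by (apply d_mono; lia). lra.
Qed.

Lemma bsp_vanish m i t : (t < d i \/ d (i + S m)%nat <= t) -> bsp d m i t = 0.
Proof.
  intros H. destruct (Req_dec (bsp d m i t) 0) as [E|E]; auto.
  apply bsp_support in E. lra.
Qed.

(* Where B_{j,m+1} does not vanish, its support is a proper interval, so the
   recursion weights are genuine quotients (the "0 / 0 = 0" rule is inactive). *)
Lemma weights_explicit m j t : bsp d m j t <> 0 ->
  d (j + S m)%nat - d j > 0 /\
  wup m j t = (t - d j) / (d (j + S m)%nat - d j) /\
  wdown m j t = (d (j + S m)%nat - t) / (d (j + S m)%nat - d j).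
Proof.
  intros H. apply bsp_support in H. unfold wup, wdown, sdiv.
  destruct (Req_EM_T (d (j + S m)%nat - d j) 0); [lra|]. repeat split; lra.
Qed.

Lemma rsum_bsp_succ m c a n t :
  rsum (fun i => c i * bsp d (S m) i t) a (S n) =
  c a * wup m a t * bsp d m a t
  + rsum (fun j => (c (pred j) * wdown m j t + c j * wup m j t) * bsp d m j t) (S a) n
  + c (a + n)%nat * wdown m (S (a + n)) t * bsp d m (S (a + n)) t.
Proof.
  induction n as [|n IH].
  - cbn [rsum]. rewrite Nat.add_0_r, bsp_succ. ring.
  - change (rsum (fun i => c i * bsp d (S m) i t) a (S (S n))) with
      (rsum (fun i => c i * bsp d (S m) i t) a (S n)
       + c (a + S n)%nat * bsp d (S m) (a + S n)%nat t).
    rewrite IH. cbn [rsum]. replace (a + S n)%nat with (S (a + n)) by lia.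
    replace (S a + n)%nat with (S (a + n)) by lia. simpl pred.
    rewrite bsp_succ. ring.
Qed.

Lemma boundary_terms_vanish m a n t : d (a + S m)%nat <= t < d (a + S n)%nat ->
  bsp d m a t = 0 /\ bsp d m (S (a + n)) t = 0.
Proof.
  intros Ht. split; apply bsp_vanish; [right; lra|].
  left. replace (S (a + n)) with (a + S n)%nat by lia. lra.
Qed.

Lemma bsp_partition_of_unity m : forall a n t,
  d (a + m)%nat <= t < d (a + n)%nat -> rsum (fun i => bsp d m i t) a n = 1.
Proof.
  induction m as [|m IH]; intros a n t Ht.
  - induction n as [|n IHn]; [lra|]. cbn [rsum].
    destruct (Rlt_dec t (d (a + n)%nat)).
    + rewrite IHn by lra. rewrite bsp_vanish by lra. ring.
    + rewrite rsum_zero.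
      * simpl. replace (S (a + n)) with (a + S n)%nat by lia.
        destruct (Rle_dec (d (a + n)%nat) t); destruct (Rlt_dec t (d (a + S n)%nat)); lra.
      * intros i Hi. apply bsp_vanish. right.
        assert (d (i + 1)%nat <= d (a + n)%nat) by (apply d_mono; lia). lra.
  - destruct n as [|n].
    { assert (d (a + 0)%nat <= d (a + S m)%nat) by (apply d_mono; lia). lra. }
    destruct (boundary_terms_vanish m a n t Ht) as [B0 B1].
    rewrite (rsum_ext _ (fun i => 1 * bsp d (S m) i t)) by (intros; ring).
    rewrite rsum_bsp_succ, B0, B1.
    rewrite (rsum_ext _ (fun j => bsp d m j t)).
    + rewrite IH; [ring|]. replace (S a + m)%nat with (a + S m)%nat by lia.
      replace (S a + n)%nat with (a + S n)%nat by lia. exact Ht.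
    + intros j _. destruct (Req_dec (bsp d m j t) 0) as [E|E]; [rewrite E; ring|].
      destruct (weights_explicit m j t E) as [D [U V]]. rewrite U, V. field. lra.
Qed.

(* greville m i = d_{i+1} + ... + d_{i+m}: m times the Greville abscissa. *)
Fixpoint greville (m i : nat) : R :=
  match m with O => 0 | S m' => greville m' i + d (i + S m')%nat end.

Lemma greville_shift m i : greville (S m) i = d (S i) + greville m (S i).
Proof.
  induction m as [|m IH].
  - simpl. replace (i + 1)%nat with (S i) by lia. ring.
  - change (greville (S (S m)) i) with (greville (S m) i + d (i + S (S m))%nat).
    rewrite IH. simpl. replace (S (i + S m)) with (i + S (S m))%nat by lia. ring.
Qed.

Lemma bsp_reproduces_identity m : forall a n t,
  d (a + m)%nat <= t < d (a + n)%nat ->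
  rsum (fun i => greville m i * bsp d m i t) a n = INR m * t.
Proof.
  induction m as [|m IH]; intros a n t Ht.
  - simpl. rewrite rsum_zero by (intros; ring). ring.
  - destruct n as [|n].
    { assert (d (a + 0)%nat <= d (a + S m)%nat) by (apply d_mono; lia). lra. }
    destruct (boundary_terms_vanish m a n t Ht) as [B0 B1].
    assert (Ht' : d (S a + m)%nat <= t < d (S a + n)%nat).
    { replace (S a + m)%nat with (a + S m)%nat by lia.
      replace (S a + n)%nat with (a + S n)%nat by lia. exact Ht. }
    rewrite rsum_bsp_succ, B0, B1.
    rewrite (rsum_ext _ (fun j => greville m j * bsp d m j t + t * bsp d m j t)).
    + rewrite rsum_plus, rsum_scal, IH, bsp_partition_of_unity by exact Ht'.
      rewrite S_INR. ring.
    + intros j Hj. destruct (Req_dec (bsp d m j t) 0) as [E|E]; [rewrite E; ring|].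
      destruct (weights_explicit m j t E) as [D [U V]]. rewrite U, V.
      destruct j as [|j']; [lia|]. simpl pred. rewrite greville_shift.
      change (greville (S m) (S j')) with (greville m (S j') + d (S j' + S m)%nat).
      field. lra.
Qed.

End BSplineIdentities.

Section ExtendedKnots.

Variables (k l : nat) (tau : nat -> R).
Hypothesis k_ge4 : (4 <= k)%nat.
Hypothesis k_le : (k <= l - 1)%nat.
Hypothesis tau_incr : forall i, (i + 1 < l)%nat -> tau i < tau (S i).

Lemma tau_le p q : (p <= q)%nat -> (q < l)%nat -> tau p <= tau q.
Proof.
  induction q as [|q IH]; intros H1 H2.
  - replace p with 0%nat by lia. lra.
  - destruct (Nat.eq_dec p (S q)) as [->|]; [lra|].
    assert (tau q < tau (S q)) by (apply tau_incr; lia).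
    assert (tau p <= tau q) by (apply IH; lia). lra.
Qed.

Lemma tau_ends : tau 0%nat < tau (l - 1)%nat.
Proof.
  assert (tau 0%nat <= tau (l - 2)%nat) by (apply tau_le; lia).
  replace (l - 1)%nat with (S (l - 2)) by lia.
  assert (tau (l - 2)%nat < tau (S (l - 2))) by (apply tau_incr; lia). lra.
Qed.

Definition knot_index (i : nat) : nat :=
  if Nat.ltb i k then 0%nat
  else if Nat.ltb i (k + l - 2) then (i - k + 1)%nat else (l - 1)%nat.

Lemma delta_knot_index i : delta k l tau i = tau (knot_index i).
Proof. unfold delta, knot_index. destruct (Nat.ltb i k), (Nat.ltb i (k + l - 2)); auto. Qed.

Lemma knot_index_lt i : (knot_index i < l)%nat.
Proof.
  unfold knot_index.
  destruct (Nat.ltb_spec i k); [lia|]. destruct (Nat.ltb_spec i (k + l - 2)); lia.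
Qed.

Lemma knot_index_mono i j : (i <= j)%nat -> (knot_index i <= knot_index j)%nat.
Proof.
  intros. unfold knot_index.
  destruct (Nat.ltb_spec i k); destruct (Nat.ltb_spec j k); try lia;
  destruct (Nat.ltb_spec i (k + l - 2)); destruct (Nat.ltb_spec j (k + l - 2)); lia.
Qed.

Lemma delta_mono i j : (i <= j)%nat -> delta k l tau i <= delta k l tau j.
Proof.
  intros. rewrite !delta_knot_index.
  apply tau_le; [apply knot_index_mono; auto | apply knot_index_lt].
Qed.

Lemma interior_in_active_span t : tau 0%nat < t < tau (l - 1)%nat ->
  delta k l tau (0 + (k - 1))%nat <= t < delta k l tau (0 + (k + l - 2))%nat.
Proof.
  intros. rewrite !delta_knot_index. unfold knot_index.
  destruct (Nat.ltb_spec (0 + (k - 1)) k); [|lia].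
  destruct (Nat.ltb_spec (0 + (k + l - 2)) k); [lia|].
  destruct (Nat.ltb_spec (0 + (k + l - 2)) (k + l - 2)); [lia|]. lra.
Qed.

Lemma BBk_rsum x t :
  BBk k l tau x t = rsum (fun i => x i * Bspl k l tau i t) 0 (k + l - 2).
Proof. unfold BBk. rewrite sum_n_rsum. f_equal. lia. Qed.

Lemma BBk_affine x al be t :
  (forall i, x i = al * greville (delta k l tau) (k - 1) i + be) ->
  tau 0%nat < t < tau (l - 1)%nat ->
  BBk k l tau x t = al * INR (k - 1) * t + be.
Proof.
  intros Hx Ht. rewrite BBk_rsum.
  rewrite (rsum_ext _ (fun i => al * (greville (delta k l tau) (k - 1) i * Bspl k l tau i t)
                                + be * Bspl k l tau i t)) by (intros; rewrite Hx; ring).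
  rewrite rsum_plus, !rsum_scal. unfold Bspl.
  pose proof (interior_in_active_span t Ht).
  rewrite bsp_reproduces_identity, bsp_partition_of_unity by (auto; apply delta_mono). ring.
Qed.

Definition piecewise_continuous (f : R -> R) : Prop :=
  forall j, (S j < l)%nat -> exists g : R -> R, (forall x, continuous g x) /\
     forall t, tau j < t < tau (S j) -> f t = g t.

Lemma pwc_ext f g : (forall t, f t = g t) -> piecewise_continuous f -> piecewise_continuous g.
Proof.
  intros E H j Hj. destruct (H j Hj) as [h [C Eh]].
  exists h; split; auto. intros; rewrite <- E; auto.
Qed.

Lemma pwc_continuous g : (forall x, continuous g x) -> piecewise_continuous g.
Proof. intros C j _. exists g; auto. Qed.

Lemma pwc_plus f g : piecewise_continuous f -> piecewise_continuous g ->
  piecewise_continuous (fun t => f t + g t).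
Proof.
  intros Hf Hg j Hj. destruct (Hf j Hj) as [f' [Cf Ef]], (Hg j Hj) as [g' [Cg Eg]].
  exists (fun t => f' t + g' t). split.
  - intros x. apply (continuous_plus f' g'); auto.
  - intros t Ht; rewrite Ef, Eg; auto.
Qed.

Lemma pwc_mult f g : piecewise_continuous f -> piecewise_continuous g ->
  piecewise_continuous (fun t => f t * g t).
Proof.
  intros Hf Hg j Hj. destruct (Hf j Hj) as [f' [Cf Ef]], (Hg j Hj) as [g' [Cg Eg]].
  exists (fun t => f' t * g' t). split.
  - intros x. apply (continuous_mult f' g'); auto.
  - intros t Ht; rewrite Ef, Eg; auto.
Qed.

Lemma pwc_rsum (F : nat -> R -> R) a n : (forall i, piecewise_continuous (F i)) ->
  piecewise_continuous (fun t => rsum (fun i => F i t) a n).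
Proof.
  intros H. induction n as [|n IH].
  - apply pwc_continuous. intros; apply continuous_const.
  - exact (pwc_plus _ (F (a + n)%nat) IH (H _)).
Qed.

Lemma continuous_sdiv_affine (al be D : R) x : continuous (fun t => sdiv (al * t + be) D) x.
Proof.
  unfold sdiv. destruct (Req_EM_T D 0).
  - apply continuous_const.
  - apply (@ex_derive_continuous R_AbsRing R_NormedModule). auto_derive. auto.
Qed.

(* Order-1 B-splines are constant on each knot interval, since no knot of the
   extended vector lies strictly inside one. *)
Lemma pwc_bsp_order1 i : piecewise_continuous (bsp (delta k l tau) 0 i).
Proof.
  intros j Hj.
  exists (fun _ => bsp (delta k l tau) 0 i ((tau j + tau (S j)) / 2)). split.
  - intros; apply continuous_const.
  - intros t Htj. simpl. rewrite !delta_knot_index.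
    assert (tau j < tau (S j)) by (apply tau_incr; lia).
    assert (Hsep : forall p, (p < l)%nat -> tau p <= tau j \/ tau (S j) <= tau p).
    { intros p Hp. destruct (Compare_dec.le_lt_dec p j).
      - left. apply tau_le; lia.
      - right. apply tau_le; lia. }
    pose proof (Hsep _ (knot_index_lt i)). pose proof (Hsep _ (knot_index_lt (S i))).
    destruct (Rle_dec (tau (knot_index i)) t);
      destruct (Rle_dec (tau (knot_index i)) ((tau j + tau (S j)) / 2)); try lra;
      try (destruct (Rlt_dec t (tau (knot_index (S i))));
           destruct (Rlt_dec ((tau j + tau (S j)) / 2) (tau (knot_index (S i)))); lra);
      reflexivity.
Qed.

Lemma pwc_bsp m i : piecewise_continuous (bsp (delta k l tau) m i).
Proof.
  revert i. induction m as [|m IH]; intros i; [apply pwc_bsp_order1|].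
  set (dl := delta k l tau).
  apply (pwc_ext (fun t => wup dl m i t * bsp dl m i t + wdown dl m (S i) t * bsp dl m (S i) t)).
  { intros t; rewrite bsp_succ; auto. }
  apply pwc_plus; apply pwc_mult; auto; apply pwc_continuous; intros x.
  - unfold wup. eapply continuous_ext; [|apply (continuous_sdiv_affine 1 (- dl i))].
    intros; simpl; f_equal; ring.
  - unfold wdown. eapply continuous_ext;
      [|apply (continuous_sdiv_affine (-1) (dl (S i + S m)%nat))].
    intros; simpl; f_equal; ring.
Qed.

Lemma pwc_BBk x : piecewise_continuous (BBk k l tau x).
Proof.
  apply (pwc_ext (fun t => rsum (fun i => x i * Bspl k l tau i t) 0 (k + l - 2))).
  { intros; rewrite BBk_rsum; auto. }
  apply (pwc_rsum (fun i t => x i * Bspl k l tau i t)). intros i.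
  apply (pwc_mult (fun _ => x i)); [apply pwc_continuous; intros; apply continuous_const|].
  apply pwc_bsp.
Qed.

Lemma pwc_integrable f : piecewise_continuous f -> ex_RInt f (tau 0%nat) (tau (l - 1)%nat).
Proof.
  intros H.
  assert (Hj : forall j, (j < l)%nat -> ex_RInt f (tau 0%nat) (tau j)).
  { induction j as [|j IH]; intros Hj; [apply ex_RInt_point|].
    apply ex_RInt_Chasles with (tau j); [apply IH; lia|].
    destruct (H j Hj) as [g [C E]].
    assert (tau j < tau (S j)) by (apply tau_incr; lia).
    apply ex_RInt_ext with g.
    { intros x Hx. rewrite Rmin_left, Rmax_right in Hx by lra. symmetry; apply E; lra. }
    apply (@ex_RInt_continuous R_CompleteNormedModule). intros; apply C. }
  apply Hj; lia.
Qed.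

(* Pure tones: coefficient vectors whose spline is t |-> om t + th. *)
Definition tone (om th : R) (i : nat) : R :=
  om / INR (k - 1) * greville (delta k l tau) (k - 1) i + th.

Lemma order_pos : 0 < INR (k - 1).
Proof. apply lt_0_INR. lia. Qed.

Lemma BBk_tone om th t : tau 0%nat < t < tau (l - 1)%nat ->
  BBk k l tau (tone om th) t = om * t + th.
Proof.
  intros Ht. rewrite (BBk_affine _ (om / INR (k - 1)) th) by auto.
  field. pose proof order_pos. lra.
Qed.

Lemma BBk_one t : tau 0%nat < t < tau (l - 1)%nat -> BBk k l tau (fun _ => 1) t = 1.
Proof. intros Ht. rewrite (BBk_affine _ 0 1) by (auto; intros; ring). ring. Qed.

Lemma vcomb_tone lam om th1 th2 i :
  vcomb lam (tone om th1) (tone om th2) i = tone om (lam * th1 + (1 - lam) * th2) i.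
Proof. unfold vcomb, tone. ring. Qed.

Lemma vcomb_const lam i : vcomb lam (fun _ => 1) (fun _ => 1) i = 1.
Proof. unfold vcomb. ring. Qed.

Lemma locally_interior t : tau 0%nat < t < tau (l - 1)%nat ->
  locally t (fun y => tau 0%nat < y < tau (l - 1)%nat).
Proof. intros H. apply (open_and _ _ (open_gt _) (open_lt _)). auto. Qed.

Lemma tone_soul mu0 mu1 mu2 om th : 0 < mu0 -> 0 < mu1 -> 0 < mu2 -> mu0 <= om ->
  IMSS k l tau mu0 mu1 mu2 (fun _ => 1) (tone om th).
Proof.
  intros H0 H1 H2 Hom t Ht.
  assert (D1 : forall y, tau 0%nat < y < tau (l - 1)%nat ->
                 Derive (BBk k l tau (tone om th)) y = om).
  { intros y Hy. rewrite (Derive_ext_loc _ (fun y => om * y + th)).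
    - apply is_derive_unique. auto_derive; auto. ring.
    - eapply filter_imp; [|apply (locally_interior _ Hy)]. intros z Hz. apply BBk_tone; auto. }
  assert (D2 : Derive (Derive (BBk k l tau (tone om th))) t = 0).
  { rewrite (Derive_ext_loc _ (fun _ => om)); [apply Derive_const|].
    eapply filter_imp; [|apply (locally_interior _ Ht)]. exact D1. }
  assert (D3 : Derive (BBk k l tau (fun _ => 1)) t = 0).
  { rewrite (Derive_ext_loc _ (fun _ => 1)); [apply Derive_const|].
    eapply filter_imp; [|apply (locally_interior _ Ht)]. exact BBk_one. }
  rewrite D1, D2, D3, BBk_one, Rabs_R0 by auto.
  pose proof (Rabs_pos om).
  repeat split; try lra; apply Rmult_le_pos; lra.
Qed.

Definition tone_cost (s : nat -> R) (om th : R) : R :=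
  RInt (fun t => (BBk k l tau s t - cos (om * t + th)) ^ 2) (tau 0%nat) (tau (l - 1)%nat).

Lemma cost1_ext s a a' phi phi' :
  (forall i, a i = a' i) -> (forall i, phi i = phi' i) ->
  cost1 k l tau s a phi = cost1 k l tau s a' phi'.
Proof.
  intros Ha Hp. unfold cost1. apply RInt_ext. intros t _. unfold BBk.
  rewrite (sum_n_ext (fun i => a i * Bspl k l tau i t) (fun i => a' i * Bspl k l tau i t)),
          (sum_n_ext (fun i => phi i * Bspl k l tau i t) (fun i => phi' i * Bspl k l tau i t))
    by (intros; rewrite ?Ha, ?Hp; reflexivity).
  reflexivity.
Qed.

Lemma cost1_tone s om th : cost1 k l tau s (fun _ => 1) (tone om th) = tone_cost s om th.
Proof.
  unfold cost1, tone_cost. apply RInt_ext.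
  intros x Hx. pose proof tau_ends.
  rewrite Rmin_left, Rmax_right in Hx by lra.
  rewrite BBk_one, BBk_tone, Rmult_1_l by lra. reflexivity.
Qed.

Lemma tone_cost_periodic s om th : tone_cost s om (th + 2 * PI) = tone_cost s om th.
Proof.
  unfold tone_cost. apply RInt_ext. intros x _.
  replace (om * x + (th + 2 * PI)) with (om * x + th + 2 * INR 1 * PI) by (simpl; ring).
  rewrite cos_period. reflexivity.
Qed.

Lemma tone_cost_integrable s om th :
  is_RInt (fun t => (BBk k l tau s t - cos (om * t + th)) ^ 2)
          (tau 0%nat) (tau (l - 1)%nat) (tone_cost s om th).
Proof.
  apply (RInt_correct (V := R_CompleteNormedModule)). apply pwc_integrable.
  set (e := fun t => BBk k l tau s t + - cos (om * t + th)).
  apply (pwc_ext (fun t => e t * e t)); [intros; unfold e; ring|].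
  assert (He : piecewise_continuous e).
  { apply pwc_plus; [apply pwc_BBk|]. apply pwc_continuous. intros x.
    apply (@ex_derive_continuous R_AbsRing R_NormedModule). auto_derive. auto. }
  apply pwc_mult; exact He.
Qed.

(* Alternating sum over the four quarter phases: the data s cancels and only
   int 2 cos(2(om t + th)) dt remains. *)
Lemma tone_cost_quarter_sum s om th : om <> 0 ->
  tone_cost s om th + tone_cost s om (th + PI) - tone_cost s om (th + PI / 2)
  - tone_cost s om (th + 3 * PI / 2)
  = (sin (2 * (om * tau (l - 1)%nat + th)) - sin (2 * (om * tau 0%nat + th))) / om.
Proof.
  intros Hom.
  pose proof (is_RInt_minus _ _ _ _ _ _
    (is_RInt_minus _ _ _ _ _ _
      (is_RInt_plus _ _ _ _ _ _ (tone_cost_integrable s om th)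
                                (tone_cost_integrable s om (th + PI)))
      (tone_cost_integrable s om (th + PI / 2)))
    (tone_cost_integrable s om (th + 3 * PI / 2))) as J.
  apply (is_RInt_ext _ (fun y => 2 * cos (2 * (om * y + th)))) in J.
  2:{ intros x _. unfold minus, plus, opp; simpl.
      replace (om * x + (th + PI)) with ((om * x + th) + PI) by ring.
      replace (om * x + (th + PI / 2)) with ((om * x + th) + PI / 2) by ring.
      replace (om * x + (th + 3 * PI / 2)) with (((om * x + th) + PI) + PI / 2) by field.
      set (u := om * x + th).
      rewrite cos_2a, !cos_plus, !sin_plus, cos_PI, sin_PI, cos_PI2, sin_PI2. ring. }
  assert (K : is_RInt (fun y => 2 * cos (2 * (om * y + th))) (tau 0%nat) (tau (l - 1)%nat)
                (minus (sin (2 * (om * tau (l - 1)%nat + th)) / om)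
                       (sin (2 * (om * tau 0%nat + th)) / om))).
  { apply (is_RInt_derive (fun y => sin (2 * (om * y + th)) / om)).
    - intros x _. auto_derive; auto. field. auto.
    - intros x _. apply (@ex_derive_continuous R_AbsRing R_NormedModule). auto_derive. auto. }
  apply (is_RInt_unique (V := R_CompleteNormedModule)) in J.
  apply (is_RInt_unique (V := R_CompleteNormedModule)) in K.
  rewrite J in K. unfold minus, plus, opp in K; simpl in K.
  unfold Rminus at 1 2 3. rewrite K. field. auto.
Qed.

(* Convexity of the cost forces each tone cost to decrease under a quarter
   phase shift: phase th + pi/2 = 3/4 th + 1/4 (th + 2pi). *)
Lemma convex_quarter_shift mu0 mu1 mu2 s om th :
  0 < mu0 -> 0 < mu1 -> 0 < mu2 -> mu0 <= om ->
  convex_on (IMSS k l tau mu0 mu1 mu2) (cost1 k l tau s) ->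
  tone_cost s om (th + PI / 2) <= tone_cost s om th.
Proof.
  intros H0 H1 H2 Hom Hconv.
  specialize (Hconv (fun _ => 1) (tone om th) (fun _ => 1) (tone om (th + 2 * PI)) (3 / 4)
                (tone_soul _ _ _ _ _ H0 H1 H2 Hom) (tone_soul _ _ _ _ _ H0 H1 H2 Hom)
                ltac:(lra)).
  rewrite (cost1_ext s _ (fun _ => 1) _ (tone om (th + PI / 2))) in Hconv.
  - rewrite !cost1_tone, tone_cost_periodic in Hconv. lra.
  - apply vcomb_const.
  - intros i. rewrite vcomb_tone. f_equal. field.
Qed.

End ExtendedKnots.

Lemma quarter_shift_invariant (g : R -> R) :
  (forall x, g (x + PI / 2) <= g x) -> (forall x, g (x + 2 * PI) = g x) ->
  forall x, g (x + PI / 2) = g x.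
Proof.
  intros Hdec Hper x.
  pose proof (Hdec x). pose proof (Hdec (x + PI / 2)).
  pose proof (Hdec (x + PI / 2 + PI / 2)). pose proof (Hdec (x + PI / 2 + PI / 2 + PI / 2)).
  replace (x + PI / 2 + PI / 2 + PI / 2 + PI / 2) with (x + 2 * PI) in * by field.
  rewrite Hper in *. lra.
Qed.

Lemma resonant_frequency (mu0 T : R) : 0 < T ->
  exists om, mu0 <= om /\ sin (om * T) = 1.
Proof.
  intros HT. destruct (archimed (mu0 * T / (2 * PI))) as [Hup _].
  pose proof PI_RGT_0.
  set (N := Z.to_nat (up (mu0 * T / (2 * PI)))).
  assert (HN : mu0 * T / (2 * PI) < INR N).
  { unfold N. destruct (Z_le_gt_dec 0 (up (mu0 * T / (2 * PI)))) as [Hz|Hz].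
    - rewrite INR_IZR_INZ, Z2Nat.id; auto.
    - pose proof (pos_INR (Z.to_nat (up (mu0 * T / (2 * PI))))).
      apply Z.gt_lt, IZR_lt in Hz. lra. }
  exists ((PI / 2 + 2 * INR N * PI) / T). split.
  - apply Rle_div_r; [lra|].
    apply (Rmult_lt_compat_r (2 * PI)) in HN; [|lra].
    replace (mu0 * T / (2 * PI) * (2 * PI)) with (mu0 * T) in HN by (field; lra). lra.
  - replace ((PI / 2 + 2 * INR N * PI) / T * T) with (PI / 2 + 2 * INR N * PI) by (field; lra).
    rewrite sin_period. apply sin_PI2.
Qed.

Theorem mainTheorem4 (k l : nat) (tau : nat -> R) (mu0 mu1 mu2 : R) (s : nat -> R) :
  (4 <= k)%nat -> (k <= l - 1)%nat ->
  (forall i, (i + 1 < l)%nat -> tau i < tau (S i)) ->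
  0 < mu0 -> 0 < mu1 -> 0 < mu2 ->
  ~ convex_on (IMSS k l tau mu0 mu1 mu2) (cost1 k l tau s).
Proof.
  intros Hk Hl Ht H0 H1 H2 Hconv.
  set (T0 := tau 0%nat). set (T1 := tau (l - 1)%nat).
  assert (HT : T0 < T1) by exact (tau_ends k l tau Hk Hl Ht).
  destruct (resonant_frequency mu0 (T1 - T0) ltac:(lra)) as [om [Hom Hsin]].
  set (G := tone_cost k l tau s om).
  assert (Hinv : forall x, G (x + PI / 2) = G x).
  { apply quarter_shift_invariant.
    - intros x. exact (convex_quarter_shift k l tau Hk Hl Ht _ _ _ _ _ x H0 H1 H2 Hom Hconv).
    - intros x. apply tone_cost_periodic. }
  (* Centre the phase so that the boundary sines are sin(+-om(T1 - T0)). *)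
  set (th := - (om * (T0 + T1)) / 2).
  pose proof (tone_cost_quarter_sum k l tau Hk Hl Ht s om th ltac:(lra)) as Hsum.
  fold T0 T1 G in Hsum.
  replace (th + PI) with (th + PI / 2 + PI / 2) in Hsum by field.
  replace (th + 3 * PI / 2) with (th + PI / 2 + PI / 2 + PI / 2) in Hsum by field.
  rewrite !Hinv in Hsum.
  replace (2 * (om * T1 + th)) with (om * (T1 - T0)) in Hsum by (unfold th; field).
  replace (2 * (om * T0 + th)) with (- (om * (T1 - T0))) in Hsum by (unfold th; field).
  rewrite sin_neg, Hsin in Hsum.
  assert (0 < 2 / om) by (apply Rdiv_lt_0_compat; lra).
  replace ((1 - - (1)) / om) with (2 / om) in Hsum by (field; lra). lra.
Qed.
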